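(* Let $a,b\ge1$ be integers with $|a-b|>4$, and let $n=a+b+2$. Then $\operatorname{diam}(\mathcal{C}_3(S(a,b)))>\lfloor 3n/2\rfloor$.
   Context: The double star $S(a,b)$ is the tree obtained by joining the centers of the stars $K_{1,a}$ and $K_{1,b}$ by an edge; it has $a+b+2$ vertices. A proper 3-coloring of a tree $T=(V,E)$ is a map $f\colon V\to\mathbb{Z}/3\mathbb{Z}$ with $f(u)\neq f(v)$ for every edge $uv\in E$. The 3-coloring graph $\mathcal{C}_3(T)$ has the proper 3-colorings as vertices, two colorings adjacent iff they differ at exactly one vertex; $\operatorname{diam}$ denotes graph diameter. *)

From mathcomp Require Import all_boot all_order all_algebra.
Set Implicit Arguments. Unset Strict Implicit. Unset Printing Implicit Defensive.

(* Double star S(a,b) on the vertex set 'I_(a+b+2):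
   vertex 0 = centre of K_{1,a}, vertex 1 = centre of K_{1,b},
   vertices 2 .. a+1 = leaves of the first star,
   vertices a+2 .. a+b+1 = leaves of the second star. *)
Definition ds_adj (a : nat) (x y : nat) : bool :=
  [|| (x == 0) && (y == 1),
      (x == 0) && (2 <= y < a + 2)
    | (x == 1) && (a + 2 <= y)].

Definition double_star_edge (a b : nat) : rel 'I_(a + b + 2) :=
  fun u v => ds_adj a u v || ds_adj a v u.
Arguments double_star_edge : clear implicits.

Definition coloring (T : finType) := {ffun T -> 'Z_3}.

Definition proper_coloring (T : finType) (E : rel T) (f : coloring T) : bool :=
  [forall u, forall v, E u v ==> (f u != f v)].

Definition C3_adj (T : finType) (E : rel T) : rel (coloring T) :=
  fun f g => [&& proper_coloring E f, proper_coloring E g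
              & #|[set x | f x != g x]| == 1].

Definition C3_within (T : finType) (E : rel T) (k : nat) (f g : coloring T) : Prop :=
  exists s : seq (coloring T),
    [/\ size s <= k, path (C3_adj E) f s & last f s = g].

(* diam(C_3(T)) > m  :<=>  some pair of vertices of C_3(T) (proper colourings)
   is at distance > m (distance = +oo if no walk exists). *)
Definition C3_diam_gt (T : finType) (E : rel T) (m : nat) : Prop :=
  exists f g : coloring T,
    [/\ proper_coloring E f, proper_coloring E g & ~ C3_within E m f g].

From mathcomp Require Import all_boot all_order all_algebra zify.
Set Implicit Arguments. Unset Strict Implicit. Unset Printing Implicit Defensive.

(* Let x be the centre of the larger star (a leaves A) and y the other centre
   (b leaves B). Compare the colouring f with x, y, leaves |-> 0, 1, 2 and the
   colouring g with x |-> 2, y |-> 1, B |-> 0, and A |-> 1 on a set U, 0 off U.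
   A walk in C_3 recolours one vertex per step, so its length is the total
   number of recolourings, and whenever a vertex is recoloured all its
   neighbours carry the third colour. If x ever jumps between 0 and 2, all of A
   is 1 at that moment, which costs 1 + 2a + b - |U| recolourings. Otherwise x
   passes 0 -> 1 -> 2; y must leave 1 before x does and come back to 1 after x
   reaches 2, and counting the moves this forces on x, y and the leaves gives
   6 + a + |U| + 3b when b >= 1. With |U| = 2a + b - floor(3n/2), which needs
   a >= b + 5, both exceed floor(3n/2). *)

Lemma leq_sum_subpred (T : finType) (P Q : pred T) (F : T -> nat) :
  (forall v, P v -> Q v) -> \sum_(v | P v) F v <= \sum_(v | Q v) F v.
Proof. exact: (@sub_le_big _ addn leq leqnn (fun u w => leq_addr w u)). Qed.

Lemma leq_const_sum (T : finType) (A : {pred T}) (F : T -> nat) c :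
  (forall v, v \in A -> c <= F v) -> c * #|A| <= \sum_(v in A) F v.
Proof. by move=> cF; rewrite mulnC -sum_nat_const; apply: leq_sum. Qed.

Lemma ex_subset_card (T : finType) (A : {set T}) k :
  k <= #|A| -> exists2 U : {set T}, U \subset A & #|U| = k.
Proof.
case/card_geqP=> s [s_uniq <- sA]; exists [set v in s].
  by apply/subsetP=> v; rewrite inE => /sA.
by rewrite cardsE; apply/card_uniqP.
Qed.

Lemma sum_indicator_ge (T : finType) (A S : {set T}) (F : T -> nat) k :
  (forall v, v \in A -> k + (v \in S) <= F v) -> k * #|A| + #|A :&: S| <= \sum_(v in A) F v.
Proof.
move=> FA; rewrite (@leq_trans (\sum_(v in A) (k + (v \in S)))) //; last exact: leq_sum.
rewrite big_split sum_nat_const mulnC leq_add2l -sum1_card.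
rewrite (eq_bigl (fun v => (v \in A) && (v \in S))) => [|v]; last by rewrite inE.
by rewrite big_mkcondr; apply: eq_leq; apply: eq_bigr => v _; case: (_ \in _).
Qed.

Lemma Z3_cases (c : 'Z_3) : [\/ c = 0, c = 1 | c = 2]%R.
Proof.
by case: c => -[|[|[|]]] // ?; [constructor 1|constructor 2|constructor 3]; apply/val_inj.
Qed.

Lemma Z3_third (c d w e : 'Z_3) :
  c != d -> w != c -> w != d -> e != c -> e != d -> w = e.
Proof.
by case: (Z3_cases c) => ->; case: (Z3_cases d) => ->; case: (Z3_cases w) => ->;
   case: (Z3_cases e) => ->.
Qed.

Lemma first_exit (Q : pred nat) i j : i <= j -> Q i -> ~~ Q j ->
  exists k, [/\ i <= k, k < j, forall l, i <= l <= k -> Q l & ~~ Q k.+1].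
Proof.
move=> ij Qi Qj.
have ex_out : exists n, (i <= n <= j) && ~~ Q n by exists j; rewrite ij leqnn.
case: (ex_minnP ex_out) => -[|k] /andP[/andP[i_n nj] Qn] n_min.
  by move: i_n Qi; rewrite leqn0 => /eqP->; rewrite (negbTE Qn).
have ik : i <= k by rewrite leq_eqVlt in i_n; case/orP: i_n => [/eqP Ei|//]; rewrite -Ei Qi in Qn.
exists k; split => // l /andP[il lk]; apply: contraT => Ql.
by have := n_min l; rewrite il Ql (leq_trans lk (ltnW nj)) /= => /(_ isT); lia.
Qed.

Lemma last_entry (Q : pred nat) i j : i <= j -> ~~ Q i -> Q j ->
  exists k, [/\ i <= k, k < j, ~~ Q k & forall l, k < l <= j -> Q l].
Proof.
move=> ij Qi Qj.
have ex_out : exists n, (i <= n <= j) && ~~ Q n by exists i; rewrite leqnn ij.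
have ub n : (i <= n <= j) && ~~ Q n -> n <= j by case/andP=> /andP[].
case: (ex_maxnP ex_out ub) => n /andP[/andP[i_n nj] Qn] n_max.
exists n; split => //.
  by rewrite ltn_neqAle nj andbT; apply: contraNneq Qn => ->.
move=> l /andP[nl lj]; apply: contraT => Ql.
by have := n_max l; rewrite lj Ql (leq_trans i_n (ltnW nl)) /= => /(_ isT); lia.
Qed.

Section Walk.

Variables (T : finType) (E : rel T) (p : nat -> coloring T) (m : nat).
Hypothesis p_step : forall k, k < m -> C3_adj E (p k) (p k.+1).

Definition recolorings (v : T) (i j : nat) : nat :=
  \sum_(i <= k < j) (p k v != p k.+1 v).

Lemma recolorings_cat v i j k :
  i <= j -> j <= k -> recolorings v i k = recolorings v i j + recolorings v j k.
Proof. by move=> ij jk; rewrite /recolorings (@big_cat_nat _ _ _ j i k). Qed.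

Lemma recolorings_ge_neq v i j : i <= j -> (p i v != p j v) <= recolorings v i j.
Proof.
elim: j => [|j IH]; first by rewrite leqn0 => /eqP->; rewrite eqxx.
rewrite leq_eqVlt => /orP[/eqP->|ij]; first by rewrite eqxx.
rewrite (recolorings_cat v (ij : i <= j) (leqnSn j)) /recolorings big_nat1.
have := IH ij; case: (p i v =P p j v) => [->|_] /=; first by rewrite addnC leq_addr.
by move=> IHj; rewrite (leq_trans (leq_b1 _)) // (leq_trans IHj) ?leq_addr.
Qed.

Lemma recolorings_ge_times v t ts : path leq t ts ->
  sumn (pairmap (fun r s => nat_of_bool (p r v != p s v)) t ts)
    <= recolorings v t (last t ts).
Proof.
elim: ts t => [|u ts IH] t //= /andP[tu u_ts].
have u_last : u <= last u ts.
  have := mem_last u ts; rewrite inE => /orP[/eqP->//|].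
  by move/(allP (order_path_min leq_trans u_ts)).
rewrite (recolorings_cat v tu u_last) leq_add ?recolorings_ge_neq //.
exact: IH.
Qed.

Lemma sum_recolorings : \sum_v recolorings v 0 m = m.
Proof.
rewrite /recolorings exchange_big /= -[RHS]muln1 -[m in RHS]subn0 -sum_nat_const_nat.
apply: eq_big_nat => k /andP[_ km]; have /and3P[_ _ /eqP card1] := p_step km.
apply: etrans card1; rewrite -sum1_card [RHS]big_mkcond /=.
by apply: eq_bigr => v _; rewrite inE; case: (_ != _).
Qed.

Lemma walk_proper k u v : k < m -> E u v -> (p k u != p k v) && (p k.+1 u != p k.+1 v).
Proof.
move=> km Euv; have /and3P[pk pk1 _] := p_step km.
by move: pk pk1 => /forallP/(_ u)/forallP/(_ v)/implyP/(_ Euv) ->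
                   /forallP/(_ u)/forallP/(_ v)/implyP/(_ Euv) ->.
Qed.

Lemma step_fixes_others k v w :
  k < m -> p k v != p k.+1 v -> w != v -> p k w = p k.+1 w.
Proof.
move=> km pv wv; have /and3P[_ _ /cards1P[z z_only]] := p_step km.
have : v \in [set u | p k u != p k.+1 u] by rewrite inE.
rewrite z_only inE => /eqP vz; apply/eqP; apply: contraNT wv => pw.
have : w \in [set u | p k u != p k.+1 u] by rewrite inE.
by rewrite z_only inE vz.
Qed.

Lemma neighbor_third_color k v w c :
  k < m -> p k v != p k.+1 v -> E v w -> c != p k v -> c != p k.+1 v -> p k w = c.
Proof.
move=> km pv Evw c0 c1; have /andP[wk wk1] := walk_proper km Evw.
have wv : w != v by apply: contraNneq wk => ->.
apply: (Z3_third pv) => //; first by rewrite eq_sym.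
by rewrite (step_fixes_others km pv wv) eq_sym.
Qed.

End Walk.

Definition star_arc (T : finType) (x y : T) (A B : {set T}) : rel T :=
  fun u v => ((u == x) && ((v == y) || (v \in A))) || ((u == y) && ((v == x) || (v \in B))).

Definition star_rel (T : finType) (x y : T) (A B : {set T}) : rel T :=
  fun u v => star_arc x y A B u v || star_arc x y A B v u.

Lemma star_relC (T : finType) (x y : T) (A B : {set T}) :
  star_rel y x B A =2 star_rel x y A B.
Proof.
have arcC u v : star_arc y x B A u v = star_arc x y A B u v by rewrite /star_arc orbC.
by move=> u v; rewrite /star_rel !arcC.
Qed.

Section DoubleStar.

Variables (T : finType) (E : rel T) (x y : T) (A B : {set T}).
Hypotheses (xy : x != y) (xA : x \notin A) (xB : x \notin B) (yA : y \notin A)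
  (yB : y \notin B) (AB : [disjoint A & B]).
Hypothesis E_star : E =2 star_rel x y A B.

Lemma E_xy : E x y. Proof. by rewrite E_star /star_rel /star_arc !eqxx. Qed.

Lemma E_xA w : w \in A -> E x w.
Proof. by move=> wA; rewrite E_star /star_rel /star_arc eqxx wA orbT. Qed.

Lemma E_yB w : w \in B -> E y w.
Proof. by move=> wB; rewrite E_star /star_rel /star_arc eqxx wB !orbT. Qed.

Lemma star_proper (c : coloring T) : c x != c y ->
  (forall v, v \in A -> c v != c x) -> (forall v, v \in B -> c v != c y) ->
  proper_coloring E c.
Proof.
move=> cxy cA cB; apply/forallP=> u; apply/forallP=> v; apply/implyP.
have arc_neq s t : star_arc x y A B s t -> c s != c t.
  case/orP=> /andP[/eqP-> /orP[/eqP->|]] //; first by move/cA; rewrite eq_sym.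
    by rewrite eq_sym.
  by move/cB; rewrite eq_sym.
by rewrite E_star => /orP[/arc_neq // | /arc_neq]; rewrite eq_sym.
Qed.

Lemma leaf_neq_centres v : v \in A :|: B -> (v != x) && (v != y).
Proof.
by rewrite inE => vAB; apply/andP; split; apply: contraTneq vAB => ->; rewrite negb_or ?xA ?yA.
Qed.

Lemma sum_centres_leaves (F : T -> nat) :
  F x + F y + \sum_(v in A) F v + \sum_(v in B) F v <= \sum_v F v.
Proof.
rewrite [X in _ <= X](bigD1 x) // [X in _ <= _ + X](bigD1 y) 1?eq_sym //=.
rewrite -!addnA !leq_add2l -bigU //=.
by apply: leq_sum_subpred => v vAB; apply: leaf_neq_centres; rewrite inE.
Qed.

Definition source : coloring T :=
  [ffun v => if v == x then 0 else if v == y then 1 else 2]%R.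

Lemma source_x : source x = 0%R. Proof. by rewrite ffunE eqxx. Qed.
Lemma source_y : source y = 1%R. Proof. by rewrite ffunE eq_sym (negbTE xy) eqxx. Qed.

Lemma source_A v : v \in A -> source v = 2%R.
Proof.
move=> vA; have /andP[vx vy] : (v != x) && (v != y) by rewrite leaf_neq_centres // inE vA.
by rewrite ffunE (negbTE vx) (negbTE vy).
Qed.

Lemma source_B v : v \in B -> source v = 2%R.
Proof.
move=> vB; have /andP[vx vy] : (v != x) && (v != y) by rewrite leaf_neq_centres // inE vB orbT.
by rewrite ffunE (negbTE vx) (negbTE vy).
Qed.

Lemma source_proper : proper_coloring E source.
Proof.
apply: star_proper => [|v vA|v vB]; first by rewrite source_x source_y.
  by rewrite source_A ?source_x.
by rewrite source_B ?source_y.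
Qed.

Section Target.

Variable U : {set T}.
Hypothesis UA : U \subset A.

Definition target : coloring T :=
  [ffun v => if v == x then 2 else if v == y then 1 else if v \in U then 1 else 0]%R.

Lemma target_x : target x = 2%R. Proof. by rewrite ffunE eqxx. Qed.
Lemma target_y : target y = 1%R. Proof. by rewrite ffunE eq_sym (negbTE xy) eqxx. Qed.

Lemma target_A v : v \in A -> target v = if v \in U then 1%R else 0%R.
Proof.
move=> vA; have /andP[vx vy] : (v != x) && (v != y) by rewrite leaf_neq_centres // inE vA.
by rewrite ffunE (negbTE vx) (negbTE vy).
Qed.

Lemma target_B v : v \in B -> target v = 0%R.
Proof.
move=> vB; have /andP[vx vy] : (v != x) && (v != y) by rewrite leaf_neq_centres // inE vB orbT.
have vU : v \notin U by apply: contraFN (disjointFl AB vB); apply: (subsetP UA).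
by rewrite ffunE (negbTE vx) (negbTE vy) (negbTE vU).
Qed.

Lemma target_proper : proper_coloring E target.
Proof.
apply: star_proper => [|v vA|v vB]; first by rewrite target_x target_y.
  by rewrite target_A // target_x; case: (v \in U).
by rewrite target_B // target_y.
Qed.

Section WalkFromSource.

Variables (p : nat -> coloring T) (m : nat).
Hypotheses (p_step : forall k, k < m -> C3_adj E (p k) (p k.+1))
  (p_source : p 0 = source) (p_target : p m = target).

Local Notation recol v := (recolorings p v 0 m).

Lemma recolorings_centres_leaves :
  recol x + recol y + \sum_(v in A) recol v + \sum_(v in B) recol v <= m.
Proof. by rewrite -[leqRHS](sum_recolorings p_step) sum_centres_leaves. Qed.

Lemma walk_ge_jump k : k < m -> p k x != p k.+1 x -> p k x != 1%R -> p k.+1 x != 1%R ->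
  1 + #|A| + #|A :\: U| + #|B| <= m.
Proof.
move=> km xk x1 x2.
have A_k v : v \in A -> p k v = 1%R.
  by move=> vA; apply: (neighbor_third_color p_step km xk (E_xA vA)); rewrite eq_sym.
have x_ge : 1 <= recol x.
  by have := recolorings_ge_neq p x (leq0n m); rewrite p_source p_target source_x target_x.
have times : path leq 0 [:: k; m] by rewrite /= ltnW.
have A_ge : #|A| + #|A :\: U| <= \sum_(v in A) recol v.
  rewrite setDE -[#|A|]mul1n; apply: sum_indicator_ge => v vA.
  have /= := recolorings_ge_times p v times.
  by rewrite p_source p_target A_k // source_A // target_A // inE; case: (v \in U).
have B_ge : 1 * #|B| <= \sum_(v in B) recol v.
  apply: leq_const_sum => v vB.
  by have := recolorings_ge_neq p v (leq0n m); rewrite p_source p_target source_B // target_B.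
have := recolorings_centres_leaves; clear -x_ge A_ge B_ge; lia.
Qed.

Lemma ex_centre_crossings :
  (forall k, k < m -> p k x != p k.+1 x -> (p k x == 1%R) || (p k.+1 x == 1%R)) ->
  exists T1 T2, [/\ T1 < T2 < m, forall l, l <= T1 -> p l x = 0%R, p T1.+1 x = 1%R,
                    p T2 x = 1%R & forall l, T2 < l <= m -> p l x = 2%R].
Proof.
move=> x_via1.
have x0 : p 0 x == 0%R by rewrite p_source source_x.
have xm : p m x == 2%R by rewrite p_target target_x.
have xm0 : p m x != 0%R by rewrite (eqP xm).
have [T1 [_ T1m x_init x_left0]] := first_exit (Q := fun l => p l x == 0%R) (leq0n m) x0 xm0.
have xT1 : p T1 x = 0%R by apply/eqP/x_init; rewrite leqnn.
have xT1' : p T1.+1 x = 1%R.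
  by move: (x_via1 T1 T1m); rewrite xT1 eq_sym x_left0 => /(_ isT) /eqP.
have xT1'_ne2 : p T1.+1 x != 2%R by rewrite xT1'.
have [T2 [T12 T2m x_not2 x_final]] := last_entry (Q := fun l => p l x == 2%R) T1m xT1'_ne2 xm.
have xT2' : p T2.+1 x = 2%R by apply/eqP/x_final; rewrite leqnn T2m.
exists T1, T2; split => //; first by rewrite T12 T2m.
- by move=> l /x_init/eqP.
- by move: (x_via1 T2 T2m); rewrite xT2' (negbTE x_not2) orbF => /(_ isT) /eqP.
- by move=> l /x_final/eqP.
Qed.

Section ThroughColorOne.

Variables T1 T2 : nat.
Hypotheses (T12 : T1 < T2) (T2m : T2 < m) (x_init : forall l, l <= T1 -> p l x = 0%R)
  (x_T1S : p T1.+1 x = 1%R) (x_T2 : p T2 x = 1%R)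
  (x_final : forall l, T2 < l <= m -> p l x = 2%R).

Let T1m : T1 < m. Proof. exact: ltn_trans T12 T2m. Qed.
Let x_T1 : p T1 x = 0%R. Proof. exact: x_init. Qed.
Let x_T2S : p T2.+1 x = 2%R. Proof. by apply: x_final; rewrite leqnn T2m. Qed.
Let x_moves_T1 : p T1 x != p T1.+1 x. Proof. by rewrite x_T1 x_T1S. Qed.
Let x_moves_T2 : p T2 x != p T2.+1 x. Proof. by rewrite x_T2 x_T2S. Qed.

Lemma neighbors_x_T1 w : E x w -> p T1 w = 2%R.
Proof.
by move=> Exw; apply: (neighbor_third_color p_step T1m x_moves_T1 Exw); rewrite ?x_T1 ?x_T1S.
Qed.

Lemma neighbors_x_T2 w : E x w -> p T2 w = 0%R.
Proof.
by move=> Exw; apply: (neighbor_third_color p_step T2m x_moves_T2 Exw); rewrite ?x_T2 ?x_T2S.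
Qed.

Lemma x_A_recolorings : 2 + #|A| + #|U| <= recol x + \sum_(v in A) recol v.
Proof.
have x_ge : 2 <= recol x.
  have times : path leq 0 [:: T1; T1.+1; T2; T2.+1; m] by rewrite /= !leqnSn T12 T2m.
  have /= := recolorings_ge_times p x times.
  by rewrite p_source p_target source_x target_x x_T1 x_T1S x_T2 x_T2S.
have A_ge : #|A| + #|U| <= \sum_(v in A) recol v.
  rewrite -[#|A|]mul1n -{1}(setIidPr UA); apply: sum_indicator_ge => v vA.
  have times : path leq 0 [:: T1; T2; m] by rewrite /= ltnW ?(ltnW T2m).
  have /= := recolorings_ge_times p v times.
  rewrite p_source p_target source_A // target_A // neighbors_x_T1 ?neighbors_x_T2 ?E_xA //.
  by case: (v \in U).
by rewrite -addnA leq_add.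
Qed.

Lemma y_first_exit :
  exists P, [/\ P < T1, p P y = 1%R, p P.+1 y = 2%R & forall v, v \in B -> p P v = 0%R].
Proof.
have y0 : p 0 y == 1%R by rewrite p_source source_y.
have yT1 : p T1 y != 1%R by rewrite neighbors_x_T1 ?E_xy.
have [P [_ PT1 y_stay y_leave]] := first_exit (Q := fun l => p l y == 1%R) (leq0n T1) y0 yT1.
have Pm : P < m by apply: ltn_trans T1m.
have yP : p P y = 1%R by apply/eqP/y_stay; rewrite leqnn.
have yP' : p P.+1 y = 2%R.
  have /andP[_] := walk_proper p_step Pm E_xy; rewrite x_init // eq_sym => yP'0.
  exact: (@Z3_third 0 1)%R.
have y_moves : p P y != p P.+1 y by rewrite yP yP'.
exists P; split => // v vB.
by apply: (neighbor_third_color p_step Pm y_moves (E_yB vB)); rewrite ?yP ?yP'.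
Qed.

Lemma y_last_entry : exists Q,
  [/\ T2 <= Q, Q < m, p Q y = 0%R, p Q.+1 y = 1%R & forall v, v \in B -> p Q v = 2%R].
Proof.
have yT2 : p T2 y != 1%R by rewrite neighbors_x_T2 ?E_xy.
have ym : p m y == 1%R by rewrite p_target target_y.
have [Q [T2Q Qm y_notQ y_after]] := last_entry (Q := fun l => p l y == 1%R) (ltnW T2m) yT2 ym.
have yQ' : p Q.+1 y = 1%R by apply/eqP/y_after; rewrite leqnn Qm.
have y_moves : p Q y != p Q.+1 y by rewrite yQ'.
have xQ : p Q x = 2%R.
  by rewrite (step_fixes_others p_step Qm y_moves xy); apply: x_final; rewrite ltnS T2Q Qm.
have yQ : p Q y = 0%R.
  have /andP[+ _] := walk_proper p_step Qm E_xy; rewrite xQ eq_sym => yQ2.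
  exact: (@Z3_third 1 2)%R.
exists Q; split => // v vB.
by apply: (neighbor_third_color p_step Qm y_moves (E_yB vB)); rewrite ?yQ ?yQ'.
Qed.

Lemma y_B_recolorings : 0 < #|B| -> 4 + 3 * #|B| <= recol y + \sum_(v in B) recol v.
Proof.
move=> B_gt0.
have [P [PT1 yP yP' B_P]] := y_first_exit.
have [Q [T2Q Qm yQ yQ' B_Q]] := y_last_entry.
have yT1 : p T1 y == 2%R by rewrite neighbors_x_T1 ?E_xy.
have yT2 : p T2 y != 2%R by rewrite neighbors_x_T2 ?E_xy.
have [R [T1R RT2 y_stay y_leave]] := first_exit (Q := fun l => p l y == 2%R) (ltnW T12) yT1 yT2.
have yR : p R y = 2%R by apply/eqP/y_stay; rewrite leqnn T1R.
have Rm : R < m by apply: ltn_trans T2m.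
have y_times : path leq 0 [:: P; P.+1; R; R.+1; Q; Q.+1; m].
  by rewrite /= !leqnSn (leq_trans PT1 T1R) (leq_trans RT2 T2Q) Qm.
have /= y_ge := recolorings_ge_times p y y_times.
rewrite p_source p_target source_y target_y yP yP' yR yQ yQ' in y_ge.
(* Leaving 2 towards 0, y makes the leaves in B pass through 0, 1, 2, 0;
   leaving towards 1, y itself has to move once more. *)
case: (Z3_cases (p R.+1 y)) => yR'; last by rewrite yR' eqxx in y_leave.
- have y3 : 3 <= recol y by move: y_ge; rewrite yR'.
  have y_moves : p R y != p R.+1 y by rewrite yR yR'.
  have B_R v : v \in B -> p R v = 1%R.
    by move=> vB; apply: (neighbor_third_color p_step Rm y_moves (E_yB vB)); rewrite ?yR ?yR'.
  have B_times : path leq 0 [:: P; R; Q; m].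
    by rewrite /= (ltnW (leq_trans PT1 T1R)) (ltnW (leq_trans RT2 T2Q)) (ltnW Qm).
  have B_ge : 4 * #|B| <= \sum_(v in B) recol v.
    apply: leq_const_sum => v vB; have /= := recolorings_ge_times p v B_times.
    by rewrite p_source p_target source_B // target_B // B_P // B_R // B_Q.
  clear -y3 B_ge B_gt0; lia.
- have y4 : 4 <= recol y by move: y_ge; rewrite yR'.
  have B_times : path leq 0 [:: P; Q; m].
    by rewrite /= (ltnW (ltn_trans PT1 (leq_trans T12 T2Q))) (ltnW Qm).
  have B_ge : 3 * #|B| <= \sum_(v in B) recol v.
    apply: leq_const_sum => v vB; have /= := recolorings_ge_times p v B_times.
    by rewrite p_source p_target source_B // target_B // B_P // B_Q.
  clear -y4 B_ge; lia.
Qed.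

End ThroughColorOne.

Lemma walk_length_lower : 0 < #|B| ->
  1 + #|A| + #|A :\: U| + #|B| <= m \/ 6 + #|A| + #|U| + 3 * #|B| <= m.
Proof.
move=> B_gt0.
have [/existsP[[k km]] /and3P[xk x1 x2]|/existsPn no_jump] :=
  boolP [exists k : 'I_m, [&& p k x != p k.+1 x, p k x != 1%R & p k.+1 x != 1%R]].
  by left; apply: (walk_ge_jump km).
right; have x_via1 k : k < m -> p k x != p k.+1 x -> (p k x == 1%R) || (p k.+1 x == 1%R).
  by move=> km xk; move: (no_jump (Ordinal km)); rewrite /= xk /= negb_and !negbK.
have [T1 [T2 [/andP[T12 T2m] x_init x_T1S x_T2 x_final]]] := ex_centre_crossings x_via1.
have := x_A_recolorings T12 T2m x_init x_T1S x_T2 x_final.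
have := y_B_recolorings T12 T2m x_init x_T1S x_T2 x_final B_gt0.
have := recolorings_centres_leaves; clear; lia.
Qed.

End WalkFromSource.

Lemma double_star_C3_diam_gt N : 0 < #|B| ->
  N < 1 + #|A| + #|A :\: U| + #|B| -> N < 6 + #|A| + #|U| + 3 * #|B| -> C3_diam_gt E N.
Proof.
move=> B_gt0 N_jump N_via1; exists source, target.
split; [exact: source_proper | exact: target_proper |].
case=> s [s_size s_path s_last]; pose p := nth source (source :: s).
have p_step k : k < size s -> C3_adj E (p k) (p k.+1) by apply: (pathP source s_path).
have p_target : p (size s) = target.
  by rewrite /p -s_last -[size s]/((size (source :: s)).-1) nth_last.
have := walk_length_lower p_step erefl p_target B_gt0; clear -s_size N_jump N_via1; lia.
Qed.

End Target.

Lemma double_star_C3_diam_gt_card N :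
  0 < #|B| -> #|A| + #|B| <= N <= 2 * #|A| + #|B| -> N.*2 < 6 + 3 * #|A| + 4 * #|B| ->
  C3_diam_gt E N.
Proof.
move=> B_gt0 /andP[N_ge N_le] N_lt.
have U_le : 2 * #|A| + #|B| - N <= #|A| by lia.
have [U UA card_U] := ex_subset_card U_le.
apply: (double_star_C3_diam_gt UA B_gt0); rewrite ?cardsD ?(setIidPr UA) card_U; lia.
Qed.

End DoubleStar.

Definition ord_range n lo hi : {set 'I_n} := [set i : 'I_n | lo <= i < hi].

Lemma card_ord_range n lo hi : hi <= n -> #|ord_range n lo hi| = hi - lo.
Proof.
move=> hn; rewrite -sum1_card (eq_bigl (fun i : 'I_n => lo <= i < hi)) => [|i]; last first.
  by rewrite inE.
rewrite -(big_mkord (fun i => lo <= i < hi) (fun=> 1)) -(big_nat_widen _ _ _ _ _ hn).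
rewrite -(@big_nat_widenl _ 0 addn lo 0 hi xpredT (fun=> 1) (leq0n lo)) /=.
by rewrite sum_nat_const_nat muln1.
Qed.

Lemma double_star_edge_star a b (n0 : 0 < a + b + 2) (n1 : 1 < a + b + 2) :
  double_star_edge a b =2 star_rel (Ordinal n0) (Ordinal n1)
    (ord_range _ 2 (a + 2)) (ord_range _ (a + 2) (a + b + 2)).
Proof.
move=> u v; rewrite /double_star_edge /ds_adj /star_rel /star_arc -!val_eqE !inE /=.
by move: (ltn_ord u) (ltn_ord v); lia.
Qed.

Lemma three_halves_bounds l s : 1 <= s -> s + 4 < l ->
  let N := (3 * (l + s + 2)) %/ 2 in l + s <= N <= 2 * l + s /\ N.*2 < 6 + 3 * l + 4 * s.
Proof.
move=> s_gt0 sl N.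
have := divn_eq (3 * (l + s + 2)) 2; have := ltn_pmod (3 * (l + s + 2)) (isT : 0 < 2).
rewrite -/N; lia.
Qed.

Theorem mainTheorem14 (a b : nat) :
  1 <= a -> 1 <= b -> (a + 4 < b) || (b + 4 < a) ->
  let n := a + b + 2 in
  C3_diam_gt (double_star_edge a b) ((3 * n) %/ 2).
Proof.
move=> a_gt0 b_gt0 ab n; rewrite {}/n.
have n0 : 0 < a + b + 2 by rewrite addn2.
have n1 : 1 < a + b + 2 by rewrite addn2.
have E_star := double_star_edge_star n0 n1.
set A := ord_range _ 2 (a + 2) in E_star; set B := ord_range _ (a + 2) _ in E_star.
have card_A : #|A| = a by rewrite card_ord_range ?addnK // leq_add2r leq_addr.
have card_B : #|B| = b by rewrite card_ord_range // addnAC addKn.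
have AB : [disjoint A & B] by apply/pred0P => v /=; rewrite !inE; lia.
have [c0A c0B c1A c1B] : [/\ Ordinal n0 \notin A, Ordinal n0 \notin B,
                           Ordinal n1 \notin A & Ordinal n1 \notin B].
  by rewrite !inE /= !addn2.
have c01 : Ordinal n0 != Ordinal n1 by rewrite -val_eqE.
case/orP: ab => ab.
- have [N_bounds N_lt] := three_halves_bounds a_gt0 ab.
  rewrite [in b + a + 2](addnC b) in N_bounds N_lt.
  have c10 : Ordinal n1 != Ordinal n0 by rewrite eq_sym.
  have BA : [disjoint B & A] by rewrite disjoint_sym.
  have E_star' : double_star_edge a b =2 star_rel (Ordinal n1) (Ordinal n0) B A.
    by move=> u v; rewrite E_star star_relC.
  by apply: (double_star_C3_diam_gt_card c10 c1B c1A c0B c0A BA E_star'); rewrite ?card_A ?card_B.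
- have [N_bounds N_lt] := three_halves_bounds b_gt0 ab.
  by apply: (double_star_C3_diam_gt_card c01 c0A c0B c1A c1B AB E_star); rewrite ?card_A ?card_B.
Qed.
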